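(* Let $\alpha=(\alpha_n)_{n\in\mathbb{N}}\in\ell^2$ and let $f_\alpha(z)=\sum_{n\ge0}\alpha_n z^n$. The following statements are equivalent: (i) the Rhaly operator $R_\alpha$, $(R_\alpha f)(k)=\alpha_k\sum_{j=0}^k f(j)$, is compact on $\ell^2$; (ii) $f_\alpha$ belongs to $\lambda^2_{1/2}$; (iii) $\displaystyle\lim_{n\to\infty} 2^n\sum_{j=2^n}^{2^{n+1}-1}|\alpha_j|^2=0$.
   Context: $\mathbb{N}=\{0,1,2,\dots\}$; $\ell^2$ is the Hilbert space of square-summable functions $f:\mathbb{N}\to\mathbb{C}$. For $\alpha\in\ell^2$, $f_\alpha\in H^2$ (Hardy space of the unit disc), identified with its boundary function on $\mathbb{T}$. The small mean Lipschitz space is $\lambda^2_{1/2}=\{f\in L^2(\mathbb{T}): \sup_{t}|t|^{-1/2}\|f_t-f\|_{L^2}<\infty \text{ and } \lim_{t\to0}|t|^{-1/2}\|f_t-f\|_{L^2}=0\}$, where $f_t(e^{i\theta})=f(e^{i(\theta-t)})$. *)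

From Stdlib Require Import Reals.
From Coquelicot Require Import Coquelicot.
Open Scope R_scope.

Definition cexpi (x : R) : C := (cos x, sin x).

Definition in_l2 (f : nat -> C) : Prop :=
  ex_series (fun n => (Cmod (f n)) ^ 2).

Definition l2norm (f : nat -> C) : R :=
  sqrt (Series (fun n => (Cmod (f n)) ^ 2)).

Definition rhaly (alpha : nat -> C) (f : nat -> C) (k : nat) : C :=
  Cmult (alpha k) (sum_n f k).

Definition compact_on_l2 (T : (nat -> C) -> (nat -> C)) : Prop :=
  (forall f, in_l2 f -> in_l2 (T f)) /\
  (forall u : nat -> (nat -> C),
      (forall m, in_l2 (u m) /\ l2norm (u m) <= 1) ->
      exists phi : nat -> nat,
        (forall m, (phi m < phi (S m))%nat) /\
        exists g : nat -> C, in_l2 g /\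
          is_lim_seq (fun m => l2norm (fun k => Cminus (T (u (phi m)) k) (g k))) 0).

Definition fpartial (alpha : nat -> C) (N : nat) (theta : R) : C :=
  sum_n (fun n => Cmult (alpha n) (cexpi (INR n * theta))) N.

Definition transl_diff_sq_partial (alpha : nat -> C) (t : R) (N : nat) : R :=
  RInt (fun theta => (Cmod (Cminus (fpartial alpha N (theta - t))
                                   (fpartial alpha N theta))) ^ 2) 0 (2 * PI)
  / (2 * PI).

(* || (f_alpha)_t - f_alpha ||_{L^2(T)}, the boundary function of f_alpha being the
   L^2 limit of the partial sums *)
Definition transl_diff (alpha : nat -> C) (t : R) : R :=
  sqrt (real (Lim_seq (transl_diff_sq_partial alpha t))).

Definition in_small_mean_lip (alpha : nat -> C) : Prop :=
  (exists M : R, forall t : R, t <> 0 -> transl_diff alpha t / sqrt (Rabs t) <= M) /\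
  is_lim (fun t => transl_diff alpha t / sqrt (Rabs t)) 0 0.

Definition dyadic_block (alpha : nat -> C) (n : nat) : R :=
  2 ^ n * sum_n_m (fun j => (Cmod (alpha j)) ^ 2) (2 ^ n) (2 ^ (S n) - 1).

(* By Parseval, ||(f_alpha)_t - f_alpha||^2 = sum_n |alpha_n|^2 |e^{-int} - 1|^2, and
   |e^{-int} - 1|^2 is comparable to min (n^2 t^2, 1). Grouping frequencies into the dyadic
   blocks [2^m, 2^(m+1)) and taking t ~ 2^-n, the ratio ||(f_alpha)_t - f_alpha||^2 / |t| is
   bounded below by a multiple of the n-th block quantity D_n = 2^n sum_(block n) |alpha_j|^2
   and above by geometric averages of the D_m; this gives (ii) <-> (iii).
   For the Rhaly operator, a dyadic Hardy inequality bounds the part of ||R_alpha f||^2 carried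
   by the coordinates k >= 2^N by 12 sup_(m >= N) D_m ||f||^2. Under (iii), R_alpha therefore
   maps bounded, coordinatewise null sequences to norm null ones, and a diagonal extraction
   yields compactness. Conversely, the normalized indicators of [0, 2^n) are weakly null while
   ||R_alpha e_n||^2 >= D_n, so compactness forces D_n -> 0. *)

From Stdlib Require Import Reals Lra Lia Psatz Arith Classical ClassicalEpsilon.
From Coquelicot Require Import Coquelicot.
Open Scope R_scope.

Lemma sum_n_Sn_R (a : nat -> R) n : sum_n a (S n) = sum_n a n + a (S n).
Proof. exact (sum_Sn (G := R_AbelianMonoid) a n). Qed.

Lemma sum_n_zero_R N : sum_n (fun _ => 0) N = 0.
Proof. exact (sum_n_m_const_zero (G := R_AbelianMonoid) 0 N). Qed.

Lemma sum_n_m_le_loc (a b : nat -> R) n m :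
  (forall k, (n <= k <= m)%nat -> a k <= b k) -> sum_n_m a n m <= sum_n_m b n m.
Proof.
  intros Hab. rewrite (sum_n_m_ext_loc b (fun k => Rmax (a k) (b k))).
  - apply sum_n_m_le. intros k. apply Rmax_l.
  - intros k Hk. now rewrite Rmax_right by (apply Hab; exact Hk).
Qed.

Lemma sum_n_m_nonneg (a : nat -> R) n m : (forall k, 0 <= a k) -> 0 <= sum_n_m a n m.
Proof.
  intros Ha. change 0 with (@zero R_AbelianMonoid).
  rewrite <- (sum_n_m_const_zero n m). now apply sum_n_m_le.
Qed.

Lemma sum_n_nonneg (a : nat -> R) n : (forall k, 0 <= a k) -> 0 <= sum_n a n.
Proof. apply sum_n_m_nonneg. Qed.

Lemma sum_n_split (a : nat -> R) n m :
  (n <= m)%nat -> sum_n a m = sum_n a n + sum_n_m a (S n) m.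
Proof. intros Hnm. apply (sum_n_m_Chasles a 0 n m); lia. Qed.

Lemma sum_n_m_subrange_le (a : nat -> R) n m n' m' :
  (forall k, 0 <= a k) -> (n <= n')%nat -> (m' <= m)%nat ->
  sum_n_m a n' m' <= sum_n_m a n m.
Proof.
  intros Ha Hn Hm. destruct (le_lt_dec n' m') as [Hle | Hlt].
  - assert (Hhead : sum_n_m a n' m' <= sum_n_m a n m').
    { destruct (Nat.eq_dec n n') as [<- | Hne]; [lra |].
      rewrite (sum_n_m_Chasles a n (pred n') m'), Nat.succ_pred_pos by lia.
      pose proof (sum_n_m_nonneg a n (pred n') Ha). change plus with Rplus. lra. }
    rewrite (sum_n_m_Chasles a n m' m) by lia.
    pose proof (sum_n_m_nonneg a (S m') m Ha). change plus with Rplus. lra.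
  - rewrite sum_n_m_zero by lia. now apply sum_n_m_nonneg.
Qed.

Lemma sum_n_le_split (b : nat -> R) n N :
  (forall m, 0 <= b m) -> sum_n b N <= sum_n b n + sum_n_m b (S n) N.
Proof.
  intros Hb. pose proof (sum_n_m_nonneg b (S n) N Hb).
  destruct (le_lt_dec N n) as [HN | HN].
  - pose proof (sum_n_m_subrange_le b 0 n 0 N Hb (le_n 0) HN). unfold sum_n. lra.
  - rewrite (sum_n_split b n N) by lia. lra.
Qed.

Lemma sum_n_le_Series (a : nat -> R) N :
  (forall n, 0 <= a n) -> ex_series a -> sum_n a N <= Series a.
Proof.
  intros Ha Hex. apply (is_lim_seq_incr_compare (sum_n a)).
  - exact (Series_correct a Hex).
  - intros n. rewrite sum_n_Sn_R. specialize (Ha (S n)). lra.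
Qed.

Lemma Series_nonneg (a : nat -> R) : (forall n, 0 <= a n) -> ex_series a -> 0 <= Series a.
Proof.
  intros Ha Hex. apply Rle_trans with (sum_n a 0).
  - now apply sum_n_nonneg.
  - now apply sum_n_le_Series.
Qed.

Lemma ex_series_bounded (a : nat -> R) (X : R) :
  (forall n, 0 <= a n) -> (forall N, sum_n a N <= X) -> ex_series a /\ Series a <= X.
Proof.
  intros Ha HX.
  assert (Hincr : forall n, sum_n a n <= sum_n a (S n)).
  { intros n. rewrite sum_n_Sn_R. specialize (Ha (S n)). lra. }
  destruct (ex_finite_lim_seq_incr _ _ Hincr HX) as [l Hl].
  split; [now exists l |].
  rewrite (is_series_unique a l Hl).
  exact (is_lim_seq_le _ _ _ _ HX Hl (is_lim_seq_const X)).
Qed.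

Lemma is_lim_seq_sum_n (F : nat -> nat -> R) (l : nat -> R) N :
  (forall j, (j <= N)%nat -> is_lim_seq (fun m => F m j) (l j)) ->
  is_lim_seq (fun m => sum_n (F m) N) (sum_n l N).
Proof.
  induction N as [|N IH]; intros HF.
  - rewrite sum_O. apply (is_lim_seq_ext (fun m => F m 0%nat)); [intros; now rewrite sum_O | apply HF; lia].
  - rewrite sum_n_Sn_R. apply (is_lim_seq_ext (fun m => sum_n (F m) N + F m (S N))).
    + intros m. now rewrite sum_n_Sn_R.
    + apply is_lim_seq_plus'; [apply IH; intros j Hj | ]; apply HF; lia.
Qed.

Lemma is_lim_seq_sq (u : nat -> R) (l : R) : is_lim_seq u l -> is_lim_seq (fun m => u m ^ 2) (l ^ 2).
Proof.
  intros Hu. apply (is_lim_seq_ext (fun m => u m * u m)); [intros; ring |].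
  replace (l ^ 2) with (l * l) by ring. now apply is_lim_seq_mult'.
Qed.

Lemma is_lim_seq_sq_0 (u : nat -> R) : is_lim_seq u 0 -> is_lim_seq (fun m => u m ^ 2) 0.
Proof. intros Hu. replace (Finite 0) with (Finite (0 ^ 2)) by (f_equal; ring). now apply is_lim_seq_sq. Qed.

Lemma is_lim_seq_dist_0 (u : nat -> R) (l : R) : is_lim_seq u l -> is_lim_seq (fun m => Rabs (u m - l)) 0.
Proof.
  intros Hu. apply (is_lim_seq_abs_0 (fun m => u m - l)). replace (Finite 0) with (Finite (l - l)) by (f_equal; ring).
  apply is_lim_seq_minus'; [exact Hu | apply is_lim_seq_const].
Qed.

Lemma is_lim_seq_bounded_above (u : nat -> R) : is_lim_seq u 0 -> exists E, forall m, u m <= E.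
Proof.
  intros Hu. destruct (filterlim_bounded (V := R_NormedModule) u) as [E HE]; [now exists 0 |].
  exists E. intros m. exact (Rle_trans _ _ _ (Rle_abs (u m)) (HE m)).
Qed.

(** * Dyadic blocks *)

Lemma pow2_ge_1 m : (1 <= 2 ^ m)%nat.
Proof. induction m; simpl; lia. Qed.

Lemma pow2_pos n : 0 < 2 ^ n.
Proof. apply pow_lt. lra. Qed.

Lemma INR_pow2 n : INR (2 ^ n) = 2 ^ n.
Proof. rewrite pow_INR. simpl. now replace (1 + 1) with 2 by ring. Qed.

Lemma sum_n_m_inv_pow2_le n N : sum_n_m (fun m => / 2 ^ m) (S n) N <= / 2 ^ n.
Proof.
  pose proof (pow2_pos n) as Hn.
  destruct (le_lt_dec N n) as [HN | HN].
  - rewrite sum_n_m_zero by lia. apply Rlt_le, Rinv_0_lt_compat, Hn.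
  - assert (Hsum : forall k, sum_n_m (fun m => / 2 ^ m) (S n) (n + k) = / 2 ^ n - / 2 ^ (n + k)).
    { induction k as [|k IH].
      - rewrite Nat.add_0_r, sum_n_m_zero, Rminus_diag by lia. reflexivity.
      - rewrite Nat.add_succ_r, sum_n_Sm, IH by lia. change plus with Rplus.
        pose proof (pow2_pos (n + k)). simpl. field. lra. }
    replace N with (n + (N - n))%nat by lia. rewrite Hsum.
    pose proof (Rinv_0_lt_compat _ (pow2_pos (n + (N - n)))). lra.
Qed.

Lemma exists_dyadic_scale u : 0 < u <= 1 -> exists n, / 2 < 2 ^ n * u <= 1.
Proof.
  intros Hu.
  assert (Hdescent : forall k, 1 < 2 ^ k * u -> exists n, / 2 < 2 ^ n * u <= 1).
  { induction k as [|k IH]; intros Hk; [simpl in Hk; lra |].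
    destruct (Rle_lt_dec (2 ^ k * u) 1) as [Hle | Hlt]; [| now apply IH].
    exists k. simpl in Hk. lra. }
  destruct (pow_lt_1_zero (/ 2) ltac:(rewrite Rabs_pos_eq; lra) u ltac:(lra)) as [N HN].
  apply (Hdescent N). specialize (HN N (le_n N)).
  rewrite Rabs_pos_eq, pow_inv in HN by (apply pow_le; lra).
  pose proof (pow2_pos N). apply (Rmult_lt_compat_l (2 ^ N)) in HN; [| lra].
  rewrite Rinv_r in HN; lra.
Qed.

Lemma exists_dyadic_scale_above (u : R) K :
  0 < u < / 2 ^ S K -> exists n, (K < n)%nat /\ / 2 < 2 ^ n * u <= 1.
Proof.
  intros Hu. pose proof (pow2_pos (S K)). pose proof (pow_R1_Rle 2 (S K) ltac:(lra)).
  assert (HKu : 2 ^ S K * u < 1).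
  { pose proof (Rmult_lt_compat_l (2 ^ S K) _ _ ltac:(lra) (proj2 Hu)) as Hlt.
    rewrite Rinv_r in Hlt; lra. }
  destruct (exists_dyadic_scale u) as [n Hn]; [nra |].
  exists n. split; [| exact Hn].
  destruct (le_lt_dec n K) as [HnK | ]; [exfalso | assumption].
  pose proof (Rle_pow 2 n K ltac:(lra) HnK). simpl in HKu. nra.
Qed.

Definition dblock (c : nat -> R) (m : nat) : R := sum_n_m c (2 ^ m) (2 ^ S m - 1).

Lemma sum_n_m_dblock (c : nat -> R) N M :
  sum_n_m c (2 ^ N) (2 ^ S M - 1) = sum_n_m (dblock c) N M.
Proof.
  induction M as [|M IH].
  - destruct N as [|N]; [rewrite (sum_n_n (dblock c)); reflexivity |].
    pose proof (pow2_ge_1 N). rewrite !sum_n_m_zero by (simpl; lia). reflexivity.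
  - destruct (le_lt_dec N (S M)) as [HN | HN].
    + pose proof (Nat.pow_le_mono_r 2 N (S M) ltac:(lia) HN).
      pose proof (pow2_ge_1 M).
      rewrite sum_n_Sm, <- IH by lia. unfold dblock.
      rewrite (sum_n_m_Chasles c (2 ^ N) (2 ^ S M - 1)) by (simpl in *; lia).
      now replace (S (2 ^ S M - 1)) with (2 ^ S M)%nat by (simpl; lia).
    + pose proof (Nat.pow_le_mono_r 2 (S (S M)) N ltac:(lia) HN).
      pose proof (pow2_ge_1 M).
      rewrite !sum_n_m_zero by (simpl in *; lia). reflexivity.
Qed.

Lemma sum_n_le_sum_n_dblock (c : nat -> R) N :
  (forall k, 0 <= c k) -> c 0%nat = 0 -> sum_n c N <= sum_n (dblock c) N.
Proof.
  intros Hc Hc0. pose proof (Nat.pow_gt_lin_r 2 N ltac:(lia)).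
  apply Rle_trans with (sum_n c (2 ^ S N - 1)).
  - unfold sum_n. apply sum_n_m_subrange_le; [exact Hc | lia | simpl; lia].
  - rewrite (sum_n_split c 0 (2 ^ S N - 1)) by lia.
    change (S 0) with (2 ^ 0)%nat. rewrite sum_n_m_dblock, sum_O, Hc0, Rplus_0_l. apply Rle_refl.
Qed.

Definition dprefix (c : nat -> R) (m : nat) : R := sum_n c (2 ^ S m - 1).

Lemma dprefix_S (c : nat -> R) m : dprefix c (S m) = dprefix c m + dblock c (S m).
Proof.
  pose proof (pow2_ge_1 m). unfold dprefix, dblock.
  rewrite (sum_n_split c (2 ^ S m - 1)) by (simpl; lia).
  now replace (S (2 ^ S m - 1)) with (2 ^ S m)%nat by (simpl; lia).
Qed.

Definition dyadic_avg (D : nat -> R) (n : nat) : R := sum_n (fun m => 2 ^ m * D m) n / 2 ^ n.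

Lemma dyadic_avg_S (D : nat -> R) n : dyadic_avg D (S n) = dyadic_avg D n / 2 + D (S n).
Proof. unfold dyadic_avg. rewrite sum_n_Sn_R. pose proof (pow2_pos n). simpl. field. lra. Qed.

Lemma dyadic_avg_nonneg (D : nat -> R) n : (forall m, 0 <= D m) -> 0 <= dyadic_avg D n.
Proof.
  intros HD. apply Rdiv_le_0_compat; [| apply pow2_pos].
  apply sum_n_nonneg. intros m. apply Rmult_le_pos; [apply Rlt_le, pow2_pos | apply HD].
Qed.

Lemma dyadic_avg_le (D : nat -> R) E : (forall m, 0 <= D m <= E) -> forall n, dyadic_avg D n <= 2 * E.
Proof.
  intros HD n. pose proof (HD 0%nat). induction n as [|n IH].
  - unfold dyadic_avg. rewrite sum_O. simpl. lra.
  - rewrite dyadic_avg_S. specialize (HD (S n)). lra.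
Qed.

Lemma is_lim_seq_dyadic_avg (D : nat -> R) :
  (forall m, 0 <= D m) -> is_lim_seq D 0 -> is_lim_seq (dyadic_avg D) 0.
Proof.
  intros HD HDlim. apply is_lim_seq_spec. intros eps. pose proof (cond_pos eps) as Heps.
  apply is_lim_seq_spec in HDlim. destruct (HDlim (pos_div_2 (pos_div_2 eps))) as [K HK]. simpl in HK.
  assert (Hdecay : forall k, dyadic_avg D (K + k) <= dyadic_avg D K / 2 ^ k + eps / 2).
  { induction k as [|k IH].
    - rewrite Nat.add_0_r. simpl. lra.
    - rewrite Nat.add_succ_r, dyadic_avg_S.
      specialize (HK (S (K + k)) ltac:(lia)). rewrite Rminus_0_r, Rabs_pos_eq in HK by apply HD.
      pose proof (pow2_pos k). simpl. replace (dyadic_avg D K / (2 * 2 ^ k)) with (dyadic_avg D K / 2 ^ k / 2)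
        by (field; lra). lra. }
  assert (Hgeom : is_lim_seq (fun k => dyadic_avg D K * (/ 2) ^ k) 0).
  { replace (Finite 0) with (Rbar_mult (dyadic_avg D K) 0) by (simpl; f_equal; ring).
    apply is_lim_seq_scal_l, is_lim_seq_geom. rewrite Rabs_pos_eq; lra. }
  apply is_lim_seq_spec in Hgeom. destruct (Hgeom (pos_div_2 eps)) as [N HN]. simpl in HN.
  exists (K + N)%nat. intros n Hn. specialize (HN (n - K)%nat ltac:(lia)).
  specialize (Hdecay (n - K)%nat). replace (K + (n - K))%nat with n in Hdecay by lia.
  rewrite pow_inv, Rminus_0_r in HN. pose proof (Rle_abs (dyadic_avg D K * / 2 ^ (n - K))).
  rewrite Rminus_0_r, Rabs_pos_eq by now apply dyadic_avg_nonneg.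
  unfold Rdiv in *. lra.
Qed.

Lemma dyadic_avg_eventually_le (D : nat -> R) (eta : R) :
  0 < eta -> (forall m, 0 <= D m) -> is_lim_seq D 0 ->
  exists K, forall m, (K <= m)%nat -> D m <= eta /\ dyadic_avg D m <= eta.
Proof.
  intros Heta HD HDlim. pose proof (is_lim_seq_dyadic_avg D HD HDlim) as Havg.
  apply is_lim_seq_spec in HDlim, Havg.
  destruct (HDlim (mkposreal _ Heta)) as [K1 HK1], (Havg (mkposreal _ Heta)) as [K2 HK2].
  exists (K1 + K2)%nat. intros m Hm. simpl in HK1, HK2.
  specialize (HK1 m ltac:(lia)). specialize (HK2 m ltac:(lia)).
  pose proof (Rle_abs (D m - 0)). pose proof (Rle_abs (dyadic_avg D m - 0)). split; lra.
Qed.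

Lemma sum_n_Sn_C (a : nat -> C) n : sum_n a (S n) = (sum_n a n + a (S n))%C.
Proof. exact (sum_Sn (G := C_AbelianMonoid) a n). Qed.

Lemma sum_n_RtoC (f : nat -> R) k : sum_n (fun j => RtoC (f j)) k = RtoC (sum_n f k).
Proof.
  induction k as [|k IH]; [now rewrite !sum_O |].
  now rewrite sum_n_Sn_C, sum_n_Sn_R, IH, RtoC_plus.
Qed.

Lemma sum_n_Cminus (u v : nat -> C) k : sum_n (fun j => u j - v j)%C k = (sum_n u k - sum_n v k)%C.
Proof.
  induction k as [|k IH]; [now rewrite !sum_O |].
  rewrite !sum_n_Sn_C, IH. change (@eq C ((sum_n u k - sum_n v k) + (u (S k) - v (S k)))%C
    ((sum_n u k + u (S k)) - (sum_n v k + v (S k)))%C). ring.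
Qed.

Lemma Cmod_sum_n_le (u : nat -> C) k : Cmod (sum_n u k) <= sum_n (fun j => Cmod (u j)) k.
Proof. exact (norm_sum_n_m (V := C_NormedModule) u 0 k). Qed.

Lemma Cmod_sub_sq_le (a b : C) : Cmod (a - b) ^ 2 <= 2 * Cmod a ^ 2 + 2 * Cmod b ^ 2.
Proof.
  rewrite !Cmod2_alt. destruct a as [x y], b as [x' y']; simpl.
  pose proof (pow2_ge_0 (x + x')). pose proof (pow2_ge_0 (y + y')). nra.
Qed.

Lemma Cmod_add_sq (a b : C) :
  Cmod (a + b) ^ 2 = Cmod a ^ 2 + 2 * (fst a * fst b + snd a * snd b) + Cmod b ^ 2.
Proof. rewrite !Cmod2_alt. destruct a, b; simpl; ring. Qed.

Lemma Cmod_le_Rabs_fst_snd (z : C) : Cmod z <= Rabs (fst z) + Rabs (snd z).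
Proof.
  pose proof (Rabs_pos (fst z)). pose proof (Rabs_pos (snd z)).
  rewrite <- (sqrt_pow2 (Rabs (fst z) + Rabs (snd z))) by lra.
  unfold Cmod. apply sqrt_le_1_alt. rewrite <- (pow2_abs (fst z)), <- (pow2_abs (snd z)). nra.
Qed.

Lemma is_lim_seq_Cmod_of_dist (z : nat -> C) (l : C) :
  is_lim_seq (fun m => Cmod (z m - l)) 0 -> is_lim_seq (fun m => Cmod (z m)) (Cmod l).
Proof.
  intros Hz.
  apply is_lim_seq_le_le with (fun m => Cmod l - Cmod (z m - l)) (fun m => Cmod l + Cmod (z m - l)).
  - intros m. split.
    + pose proof (Cmod_triangle (l - z m) (z m)).
      replace (l - z m + z m)%C with l in * by ring.
      replace (l - z m)%C with (- (z m - l))%C in * by ring. rewrite Cmod_opp in *. lra.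
    + pose proof (Cmod_triangle (z m - l) l). replace (z m - l + l)%C with (z m) in * by ring. lra.
  - replace (Finite (Cmod l)) with (Finite (Cmod l - 0)) by (f_equal; ring).
    apply is_lim_seq_minus'; [apply is_lim_seq_const | exact Hz].
  - replace (Finite (Cmod l)) with (Finite (Cmod l + 0)) by (f_equal; ring).
    apply is_lim_seq_plus'; [apply is_lim_seq_const | exact Hz].
Qed.

Lemma l2norm_sq (f : nat -> C) : in_l2 f -> l2norm f ^ 2 = Series (fun n => Cmod (f n) ^ 2).
Proof.
  intros Hf. apply pow2_sqrt, Series_nonneg; [intros; apply pow2_ge_0 | exact Hf].
Qed.

Lemma sum_n_sq_le_l2norm_sq (f : nat -> C) N :
  in_l2 f -> sum_n (fun n => Cmod (f n) ^ 2) N <= l2norm f ^ 2.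
Proof.
  intros Hf. rewrite l2norm_sq by exact Hf.
  apply sum_n_le_Series; [intros; apply pow2_ge_0 | exact Hf].
Qed.

Lemma l2norm_le_of_partial (f : nat -> C) (X : R) :
  (forall N, sum_n (fun n => Cmod (f n) ^ 2) N <= X) -> in_l2 f /\ l2norm f <= sqrt X.
Proof.
  intros HX. destruct (ex_series_bounded _ X (fun n => pow2_ge_0 _) HX) as [Hex Hle].
  split; [exact Hex | now apply sqrt_le_1_alt].
Qed.

Lemma Cmod_le_l2norm (f : nat -> C) k : in_l2 f -> Cmod (f k) <= l2norm f.
Proof.
  intros Hf. rewrite <- (sqrt_pow2 (Cmod (f k))) by apply Cmod_ge_0.
  apply sqrt_le_1_alt. rewrite <- (sum_n_n (fun n => Cmod (f n) ^ 2) k).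
  eapply Rle_trans; [| apply (sum_n_le_Series _ k); [intros; apply pow2_ge_0 | exact Hf]].
  apply sum_n_m_subrange_le; [intros; apply pow2_ge_0 | lia | lia].
Qed.

Lemma in_l2_minus (f g : nat -> C) : in_l2 f -> in_l2 g -> in_l2 (fun k => (f k - g k)%C).
Proof.
  intros Hf Hg.
  apply (ex_series_le (V := R_CompleteNormedModule) _ (fun k => 2 * Cmod (f k) ^ 2 + 2 * Cmod (g k) ^ 2)).
  - intros n. rewrite Rabs_pos_eq by apply pow2_ge_0. apply Cmod_sub_sq_le.
  - apply (ex_series_plus (V := R_CompleteNormedModule));
      now apply (ex_series_scal_l (V := R_CompleteNormedModule)).
Qed.

Definition sqmod (alpha : nat -> C) (n : nat) : R := Cmod (alpha n) ^ 2.

Lemma sqmod_nonneg (alpha : nat -> C) n : 0 <= sqmod alpha n.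
Proof. apply pow2_ge_0. Qed.

Lemma dyadic_block_nonneg (alpha : nat -> C) n : 0 <= dyadic_block alpha n.
Proof.
  apply Rmult_le_pos; [apply Rlt_le, pow2_pos | apply sum_n_m_nonneg, sqmod_nonneg].
Qed.

(** * Parseval's identity and the translation modulus *)

Lemma cexpi_add x y : cexpi (x + y) = (cexpi x * cexpi y)%C.
Proof. unfold cexpi. rewrite cos_plus, sin_plus. apply injective_projections; simpl; ring. Qed.

Lemma Cmod_cexpi x : Cmod (cexpi x) = 1.
Proof.
  rewrite <- sqrt_1. unfold Cmod, cexpi; simpl. f_equal.
  pose proof (sin2_cos2 x). unfold Rsqr in *. lra.
Qed.

Lemma is_RInt_harmonic (k : nat) (P Q : R) : (1 <= k)%nat ->
  is_RInt (fun x => P * cos (INR k * x) + Q * sin (INR k * x)) 0 (2 * PI) 0.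
Proof.
  intros Hk. assert (Hk0 : INR k <> 0) by (apply not_0_INR; lia).
  set (F x := P * sin (INR k * x) / INR k - Q * cos (INR k * x) / INR k).
  assert (HF : minus (F (2 * PI)) (F 0) = 0).
  { unfold F, minus, plus, opp; simpl.
    replace (INR k * (2 * PI)) with (0 + 2 * INR k * PI) by ring.
    rewrite cos_period, sin_period, Rmult_0_r, sin_0, cos_0. field. exact Hk0. }
  rewrite <- HF at 2. apply (is_RInt_derive (V := R_CompleteNormedModule) F).
  - intros x _. unfold F. auto_derive; [easy | field; exact Hk0].
  - intros x _. apply (ex_derive_continuous (V := R_NormedModule)). auto_derive. easy.
Qed.

Lemma is_RInt_sum_n_zero (g : nat -> R -> R) a b N :
  (forall n, (n <= N)%nat -> is_RInt (g n) a b 0) ->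
  is_RInt (fun x => sum_n (fun n => g n x) N) a b 0.
Proof.
  induction N as [|N IH]; intros Hg.
  - apply (is_RInt_ext (g 0%nat)); [intros; now rewrite sum_O | apply Hg; lia].
  - apply (is_RInt_ext (fun x => plus (sum_n (fun n => g n x) N) (g (S N) x))).
    + intros x _. now rewrite sum_Sn.
    + rewrite <- (plus_zero_r 0). apply (is_RInt_plus (V := R_NormedModule)).
      * apply IH. intros n Hn. apply Hg. lia.
      * apply Hg. lia.
Qed.

Lemma fpartial_cross (c : nat -> C) (z : C) (K N : nat) x : (N < K)%nat ->
  fst (fpartial c N x) * fst (z * cexpi (INR K * x))%C
  + snd (fpartial c N x) * snd (z * cexpi (INR K * x))%C
  = sum_n (fun n => (fst (c n) * fst z + snd (c n) * snd z) * cos (INR (K - n) * x)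
                  + (snd (c n) * fst z - fst (c n) * snd z) * sin (INR (K - n) * x)) N.
Proof.
  unfold fpartial. induction N as [|N IH]; intros HNK.
  - rewrite !sum_O, minus_INR by lia.
    replace ((INR K - INR 0) * x) with (INR K * x - INR 0 * x) by ring.
    rewrite cos_minus, sin_minus. simpl. ring.
  - rewrite !sum_n_Sn_C, sum_n_Sn_R, <- IH by lia.
    rewrite minus_INR by lia.
    replace ((INR K - INR (S N)) * x) with (INR K * x - INR (S N) * x) by ring.
    rewrite cos_minus, sin_minus. simpl. ring.
Qed.

Lemma parseval_fpartial (c : nat -> C) N :
  is_RInt (fun x => Cmod (fpartial c N x) ^ 2) 0 (2 * PI)
    (2 * PI * sum_n (fun n => Cmod (c n) ^ 2) N).
Proof.
  induction N as [|N IH].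
  - rewrite sum_O. replace (2 * PI * Cmod (c 0%nat) ^ 2) with (scal (2 * PI - 0) (Cmod (c 0%nat) ^ 2))
      by (rewrite Rminus_0_r; reflexivity).
    apply (is_RInt_ext (fun _ => Cmod (c 0%nat) ^ 2)); [| apply (is_RInt_const (V := R_NormedModule))].
    intros x _. unfold fpartial. now rewrite sum_O, Cmod_mult, Cmod_cexpi, Rmult_1_r.
  - set (cross x := sum_n (fun n =>
        (fst (c n) * fst (c (S N)) + snd (c n) * snd (c (S N))) * cos (INR (S N - n) * x)
      + (snd (c n) * fst (c (S N)) - fst (c n) * snd (c (S N))) * sin (INR (S N - n) * x)) N).
    apply (is_RInt_ext (fun x => plus (plus (Cmod (fpartial c N x) ^ 2) (scal 2 (cross x)))
                                      (Cmod (c (S N)) ^ 2))).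
    + intros x _. unfold fpartial at 2. rewrite sum_n_Sn_C, Cmod_add_sq. fold (fpartial c N x).
      rewrite fpartial_cross, Cmod_mult, Cmod_cexpi, Rmult_1_r by lia. reflexivity.
    + replace (2 * PI * sum_n (fun n => Cmod (c n) ^ 2) (S N))
        with (plus (plus (2 * PI * sum_n (fun n => Cmod (c n) ^ 2) N) (scal 2 0))
                   (scal (2 * PI - 0) (Cmod (c (S N)) ^ 2)))
        by (rewrite sum_n_Sn_R; compute; ring).
      apply (is_RInt_plus (V := R_NormedModule)); [apply (is_RInt_plus (V := R_NormedModule)) |].
      * exact IH.
      * apply (is_RInt_scal (V := R_NormedModule)), is_RInt_sum_n_zero.
        intros n Hn. apply is_RInt_harmonic. lia.
      * apply (is_RInt_const (V := R_NormedModule)).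
Qed.

(* [|alpha n|^2 |e^{-i n t} - 1|^2], the squared modulus of the [n]-th Fourier coefficient
   of [(f_alpha)_t - f_alpha]. *)
Definition transl_term (alpha : nat -> C) (t : R) (n : nat) : R :=
  sqmod alpha n * (2 - 2 * cos (INR n * t)).

Lemma fpartial_transl_sub (alpha : nat -> C) N t x :
  (fpartial alpha N (x - t) - fpartial alpha N x)%C
  = fpartial (fun n => alpha n * (cexpi (- (INR n * t)) - 1))%C N x.
Proof.
  assert (Hshift : forall n, cexpi (INR n * (x - t)) = (cexpi (- (INR n * t)) * cexpi (INR n * x))%C).
  { intros n. rewrite <- cexpi_add. f_equal. ring. }
  unfold fpartial. induction N as [|N IH].
  - rewrite !sum_O, Hshift. ring.
  - rewrite !sum_n_Sn_C, <- IH, Hshift. ring.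
Qed.

Lemma Cmod_cexpi_sub_1_sq x : Cmod (cexpi x - 1) ^ 2 = 2 - 2 * cos x.
Proof.
  rewrite Cmod2_alt. unfold cexpi; simpl.
  pose proof (sin2_cos2 x). unfold Rsqr in *. nra.
Qed.

Lemma transl_diff_sq_partial_eq (alpha : nat -> C) t N :
  transl_diff_sq_partial alpha t N = sum_n (transl_term alpha t) N.
Proof.
  unfold transl_diff_sq_partial.
  rewrite (RInt_ext _ (fun x => Cmod (fpartial (fun n => alpha n * (cexpi (- (INR n * t)) - 1))%C N x) ^ 2))
    by (intros x _; now rewrite fpartial_transl_sub).
  rewrite (is_RInt_unique _ _ _ _ (parseval_fpartial _ N)).
  rewrite (sum_n_ext _ (transl_term alpha t)).
  - field. apply PI_neq0.
  - intros n. unfold transl_term, sqmod.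
    now rewrite Cmod_mult, Rpow_mult_distr, Cmod_cexpi_sub_1_sq, cos_neg.
Qed.

Lemma transl_diff_eq (alpha : nat -> C) t : transl_diff alpha t = sqrt (Series (transl_term alpha t)).
Proof.
  unfold transl_diff, Series. do 2 f_equal.
  apply Lim_seq_ext, transl_diff_sq_partial_eq.
Qed.

Lemma transl_term_opp (alpha : nat -> C) t n : transl_term alpha (- t) n = transl_term alpha t n.
Proof. unfold transl_term. now rewrite Ropp_mult_distr_r_reverse, cos_neg. Qed.

Lemma transl_diff_abs (alpha : nat -> C) t :
  transl_diff alpha t = sqrt (Series (transl_term alpha (Rabs t))).
Proof.
  rewrite transl_diff_eq. unfold Rabs. destruct (Rcase_abs t); [| reflexivity].
  f_equal. apply Series_ext. intros n. now rewrite transl_term_opp.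
Qed.

Lemma sin_sq_le y : sin y ^ 2 <= y ^ 2.
Proof.
  assert (Hpos : forall z, 0 < z -> - z <= sin z <= z).
  { intros z Hz. split.
    - destruct (Rle_lt_dec z PI).
      + pose proof (sin_ge_0 z). lra.
      + pose proof (SIN_bound z). pose proof PI2_1. lra.
    - pose proof (sin_lt_x z Hz). lra. }
  destruct (Rtotal_order y 0) as [Hy | [-> | Hy]].
  - specialize (Hpos (- y) ltac:(lra)). rewrite sin_neg in Hpos. nra.
  - rewrite sin_0. lra.
  - specialize (Hpos y Hy). nra.
Qed.

Lemma two_sub_two_cos_le x : 2 - 2 * cos x <= x ^ 2.
Proof.
  replace x with (2 * (x / 2)) at 1 by field. rewrite cos_2a_sin.
  pose proof (sin_sq_le (x / 2)). replace (x ^ 2) with (4 * (x / 2) ^ 2) by field. nra.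
Qed.

Lemma transl_term_nonneg (alpha : nat -> C) t n : 0 <= transl_term alpha t n.
Proof.
  pose proof (COS_bound (INR n * t)). pose proof (sqmod_nonneg alpha n).
  unfold transl_term. nra.
Qed.

Lemma transl_term_le_4 (alpha : nat -> C) t n : transl_term alpha t n <= 4 * sqmod alpha n.
Proof.
  pose proof (COS_bound (INR n * t)). pose proof (sqmod_nonneg alpha n).
  unfold transl_term. nra.
Qed.

Lemma transl_term_le_sq (alpha : nat -> C) t n :
  transl_term alpha t n <= sqmod alpha n * (INR n * t) ^ 2.
Proof.
  apply Rmult_le_compat_l; [apply sqmod_nonneg | apply two_sub_two_cos_le].
Qed.

Lemma transl_term_0 (alpha : nat -> C) t : transl_term alpha t 0 = 0.
Proof. unfold transl_term. rewrite Rmult_0_l, cos_0. ring. Qed.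

Lemma ex_series_transl_term (alpha : nat -> C) t : in_l2 alpha -> ex_series (transl_term alpha t).
Proof.
  intros Hal.
  apply (ex_series_le (V := R_CompleteNormedModule) _ (fun n => 4 * sqmod alpha n)).
  - intros n. rewrite Rabs_pos_eq by apply transl_term_nonneg. apply transl_term_le_4.
  - now apply (ex_series_scal_l (V := R_CompleteNormedModule)).
Qed.

(** * The mean Lipschitz condition implies the dyadic condition *)

(* At [t = PI / 3 / 2 ^ n] every frequency [k] of the [n]-th dyadic block has [k t] in
   [[PI/3, 2 PI/3]], where [2 - 2 cos (k t) >= 1]. *)
Lemma dblock_le_Series_transl_term (alpha : nat -> C) n : in_l2 alpha ->
  dblock (sqmod alpha) n <= Series (transl_term alpha (PI / 3 / 2 ^ n)).
Proof.
  intros Hal. set (t := PI / 3 / 2 ^ n). pose proof (pow2_pos n). pose proof PI_RGT_0.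
  apply Rle_trans with (dblock (transl_term alpha t) n).
  - apply sum_n_m_le_loc. intros k Hk.
    assert (Hk1 : 2 ^ n <= INR k) by (rewrite <- INR_pow2; apply le_INR; lia).
    assert (Hk2 : INR k <= 2 * 2 ^ n).
    { rewrite <- INR_pow2. change 2 with (INR 2) at 1. rewrite <- mult_INR.
      apply le_INR. simpl in Hk |- *. lia. }
    assert (Hkt : PI / 3 <= INR k * t <= 2 * (PI / 3)).
    { unfold t. split; apply (Rmult_le_reg_r (2 ^ n)); auto; field_simplify; nra. }
    assert (cos (INR k * t) <= 1 / 2) by (rewrite <- cos_PI3; apply cos_decr_1; lra).
    pose proof (sqmod_nonneg alpha k). unfold transl_term. nra.
  - eapply Rle_trans; [| apply (sum_n_le_Series _ (2 ^ S n - 1))].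
    + apply sum_n_m_subrange_le; [apply transl_term_nonneg | lia | lia].
    + apply transl_term_nonneg.
    + now apply ex_series_transl_term.
Qed.

Lemma dyadic_block_le_transl_ratio (alpha : nat -> C) n : in_l2 alpha ->
  dyadic_block alpha n
  <= PI / 3 * (transl_diff alpha (PI / 3 / 2 ^ n) / sqrt (Rabs (PI / 3 / 2 ^ n))) ^ 2.
Proof.
  intros Hal. set (t := PI / 3 / 2 ^ n). pose proof (pow2_pos n). pose proof PI_RGT_0.
  assert (Ht : 0 < t) by (unfold t; apply Rdiv_lt_0_compat; lra).
  assert (HS := Series_nonneg _ (transl_term_nonneg alpha t) (ex_series_transl_term alpha t Hal)).
  rewrite transl_diff_eq, Rabs_pos_eq, <- sqrt_div_alt, pow2_sqrt
    by (try apply Rdiv_le_0_compat; lra).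
  pose proof (dblock_le_Series_transl_term alpha n Hal) as Hblock. fold t in Hblock.
  unfold dyadic_block. fold (sqmod alpha). fold (dblock (sqmod alpha) n).
  replace (PI / 3 * (Series (transl_term alpha t) / t)) with (2 ^ n * Series (transl_term alpha t))
    by (unfold t; field; lra).
  apply Rmult_le_compat_l; lra.
Qed.

Lemma is_lim_seq_dyadic_scale : is_lim_seq (fun n => PI / 3 / 2 ^ n) 0.
Proof.
  apply (is_lim_seq_ext (fun n => PI / 3 * (/ 2) ^ n)).
  - intros n. now rewrite pow_inv.
  - replace (Finite 0) with (Rbar_mult (PI / 3) 0) by (simpl; f_equal; ring).
    apply is_lim_seq_scal_l, is_lim_seq_geom. rewrite Rabs_pos_eq; lra.
Qed.

Lemma dyadic_block_lim_of_transl_ratio (alpha : nat -> C) : in_l2 alpha ->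
  is_lim (fun t => transl_diff alpha t / sqrt (Rabs t)) 0 0 -> is_lim_seq (dyadic_block alpha) 0.
Proof.
  intros Hal Hlim.
  set (r n := transl_diff alpha (PI / 3 / 2 ^ n) / sqrt (Rabs (PI / 3 / 2 ^ n))).
  assert (Hr : is_lim_seq r 0).
  { apply (is_lim_comp_seq _ _ 0 0 Hlim); [| exact is_lim_seq_dyadic_scale].
    exists 0%nat. intros n _ Hn. injection Hn. pose proof (pow2_pos n). pose proof PI_RGT_0.
    apply Rgt_not_eq, Rdiv_lt_0_compat; lra. }
  apply is_lim_seq_le_le with (fun _ => 0) (fun n => PI / 3 * r n ^ 2).
  - intros n. split; [apply dyadic_block_nonneg | now apply dyadic_block_le_transl_ratio].
  - apply is_lim_seq_const.
  - replace (Finite 0) with (Rbar_mult (PI / 3) 0) by (simpl; f_equal; ring).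
    now apply is_lim_seq_scal_l, is_lim_seq_sq_0.
Qed.

(** * The dyadic condition implies the mean Lipschitz condition *)

Lemma dblock_transl_term_le_sq (alpha : nat -> C) t m :
  dblock (transl_term alpha t) m <= 4 * t ^ 2 * (2 ^ m * dyadic_block alpha m).
Proof.
  unfold dyadic_block. fold (sqmod alpha). fold (dblock (sqmod alpha) m).
  replace (4 * t ^ 2 * (2 ^ m * (2 ^ m * dblock (sqmod alpha) m)))
    with (dblock (sqmod alpha) m * ((2 * 2 ^ m) ^ 2 * t ^ 2)) by ring.
  unfold dblock. rewrite <- (sum_n_m_mult_r (K := R_Ring)).
  apply sum_n_m_le_loc. intros k Hk.
  eapply Rle_trans; [apply transl_term_le_sq |].
  rewrite Rpow_mult_distr. apply Rmult_le_compat_l; [apply sqmod_nonneg |].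
  apply Rmult_le_compat_r; [apply pow2_ge_0 |]. apply pow_incr. split; [apply pos_INR |].
  rewrite <- INR_pow2. change 2 with (INR 2) at 1. rewrite <- mult_INR.
  apply le_INR. simpl in Hk |- *. lia.
Qed.

Lemma dblock_transl_term_le_4 (alpha : nat -> C) t m :
  dblock (transl_term alpha t) m <= 4 * dyadic_block alpha m / 2 ^ m.
Proof.
  unfold dyadic_block. fold (sqmod alpha). fold (dblock (sqmod alpha) m).
  replace (4 * (2 ^ m * dblock (sqmod alpha) m) / 2 ^ m) with (dblock (sqmod alpha) m * 4)
    by (pose proof (pow2_pos m); field; lra).
  unfold dblock. rewrite <- (sum_n_m_mult_r (K := R_Ring)).
  apply sum_n_m_le. intros k. rewrite Rmult_comm. apply transl_term_le_4.
Qed.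

(* Low frequencies [m <= n] are controlled by [1 - cos x <= x^2 / 2], high ones by
   [1 - cos x <= 2]; the scale [2 ^ n ~ 1 / t] balances the two. *)
Lemma Series_transl_term_le (alpha : nat -> C) t n E :
  in_l2 alpha -> 0 < t -> / 2 < 2 ^ n * t <= 1 ->
  (forall m, (n < m)%nat -> dyadic_block alpha m <= E) ->
  Series (transl_term alpha t) <= t * (4 * dyadic_avg (dyadic_block alpha) n + 8 * E).
Proof.
  intros Hal Ht Hnt HE. pose proof (pow2_pos n).
  assert (HE0 : 0 <= E) by (eapply Rle_trans; [apply (dyadic_block_nonneg alpha (S n)) | apply HE; lia]).
  assert (Havg := dyadic_avg_nonneg _ n (dyadic_block_nonneg alpha)).
  apply ex_series_bounded; [apply transl_term_nonneg |]. intros N.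
  eapply Rle_trans; [apply sum_n_le_sum_n_dblock; [apply transl_term_nonneg | apply transl_term_0] |].
  eapply Rle_trans; [apply (sum_n_le_split _ n); intros m; apply sum_n_m_nonneg, transl_term_nonneg |].
  replace (t * (4 * dyadic_avg (dyadic_block alpha) n + 8 * E))
    with (4 * t * dyadic_avg (dyadic_block alpha) n + 8 * E * t) by ring.
  apply Rplus_le_compat.
  - eapply Rle_trans; [apply sum_n_m_le; intros m; apply dblock_transl_term_le_sq |].
    rewrite (sum_n_m_mult_l (K := R_Ring)). change mult with Rmult.
    change (sum_n_m ?f 0 n) with (sum_n f n).
    replace (sum_n (fun m => 2 ^ m * dyadic_block alpha m) n)
      with (2 ^ n * dyadic_avg (dyadic_block alpha) n) by (unfold dyadic_avg; field; lra).
    replace (4 * t ^ 2 * (2 ^ n * dyadic_avg (dyadic_block alpha) n))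
      with (4 * t * dyadic_avg (dyadic_block alpha) n * (2 ^ n * t)) by ring.
    apply Rle_trans with (4 * t * dyadic_avg (dyadic_block alpha) n * 1); [| lra].
    apply Rmult_le_compat_l; [nra | lra].
  - eapply Rle_trans; [apply sum_n_m_le_loc; intros m Hm; apply dblock_transl_term_le_4 |].
    eapply Rle_trans.
    { apply sum_n_m_le_loc with (b := fun m => 4 * E * / 2 ^ m). intros m Hm.
      pose proof (pow2_pos m). unfold Rdiv. apply Rmult_le_compat_r; [apply Rlt_le, Rinv_0_lt_compat; lra |].
      apply Rmult_le_compat_l; [lra | apply HE; lia]. }
    rewrite (sum_n_m_mult_l (K := R_Ring)). change mult with Rmult.
    assert (Hscale : / 2 ^ n <= 2 * t).
    { apply (Rmult_le_reg_l (2 ^ n)); [lra |]. rewrite Rinv_r; lra. }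
    apply Rle_trans with (4 * E * / 2 ^ n);
      [apply Rmult_le_compat_l; [lra | exact (sum_n_m_inv_pow2_le n N)] |].
    apply Rle_trans with (4 * E * (2 * t)); [apply Rmult_le_compat_l; lra | right; ring].
Qed.

Lemma transl_ratio_le_sqrt (alpha : nat -> C) t X : in_l2 alpha -> t <> 0 ->
  Series (transl_term alpha (Rabs t)) <= X * Rabs t -> transl_diff alpha t / sqrt (Rabs t) <= sqrt X.
Proof.
  intros Hal Ht HX. pose proof (Rabs_pos_lt t Ht).
  pose proof (Series_nonneg _ (transl_term_nonneg alpha (Rabs t)) (ex_series_transl_term alpha (Rabs t) Hal)).
  rewrite transl_diff_abs, <- sqrt_div_alt by lra. apply sqrt_le_1_alt.
  apply Rle_div_l; lra.
Qed.

Lemma transl_ratio_bounded (alpha : nat -> C) : in_l2 alpha -> is_lim_seq (dyadic_block alpha) 0 ->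
  exists M, forall t, t <> 0 -> transl_diff alpha t / sqrt (Rabs t) <= M.
Proof.
  intros Hal HD. destruct (is_lim_seq_bounded_above _ HD) as [E HE].
  pose proof (Rle_trans _ _ _ (dyadic_block_nonneg alpha 0) (HE 0%nat)) as HE0.
  set (A := Series (sqmod alpha)).
  assert (HA : 0 <= A) by (apply Series_nonneg; [apply sqmod_nonneg | exact Hal]).
  exists (sqrt (16 * E + 4 * A)). intros t Ht. pose proof (Rabs_pos_lt t Ht).
  apply transl_ratio_le_sqrt; [exact Hal | exact Ht |].
  destruct (Rle_lt_dec (Rabs t) 1) as [Hle | Hgt].
  - destruct (exists_dyadic_scale (Rabs t)) as [n Hn]; [lra |].
    eapply Rle_trans; [apply (Series_transl_term_le alpha _ n E); auto |].
    pose proof (dyadic_avg_le _ E (fun m => conj (dyadic_block_nonneg alpha m) (HE m)) n).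
    nra.
  - apply Rle_trans with (4 * A).
    + unfold A. rewrite <- Series_scal_l. apply Series_le.
      * intros n. split; [apply transl_term_nonneg | apply transl_term_le_4].
      * now apply (ex_series_scal_l (V := R_CompleteNormedModule)).
    + nra.
Qed.

Lemma transl_ratio_lim (alpha : nat -> C) : in_l2 alpha -> is_lim_seq (dyadic_block alpha) 0 ->
  is_lim (fun t => transl_diff alpha t / sqrt (Rabs t)) 0 0.
Proof.
  intros Hal HD. apply is_lim_spec. intros eps. pose proof (cond_pos eps) as Heps.
  set (eta := eps ^ 2 / 24). assert (Heta : 0 < eta) by (unfold eta; nra).
  destruct (dyadic_avg_eventually_le _ eta Heta (dyadic_block_nonneg alpha) HD) as [K HK].
  exists (mkposreal _ (Rinv_0_lt_compat _ (pow2_pos (S K)))). intros t Hball Ht.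
  assert (Htk : 0 < Rabs t < / 2 ^ S K).
  { split; [now apply Rabs_pos_lt |].
    unfold ball in Hball; simpl in Hball. unfold AbsRing_ball, abs, minus, plus, opp in Hball; simpl in Hball.
    now rewrite Ropp_0, Rplus_0_r in Hball. }
  destruct (exists_dyadic_scale_above _ K Htk) as [n [HKn Hn]].
  assert (Hratio : transl_diff alpha t / sqrt (Rabs t) <= sqrt (12 * eta)).
  { apply transl_ratio_le_sqrt; [exact Hal | exact Ht |].
    eapply Rle_trans; [apply (Series_transl_term_le alpha _ n eta) |].
    - exact Hal.
    - lra.
    - exact Hn.
    - intros m Hm. apply HK. lia.
    - destruct (HK n ltac:(lia)) as [_ Havgn]. nra. }
  assert (Hsqrt : sqrt (12 * eta) < eps).
  { rewrite <- (sqrt_pow2 eps) by lra. apply sqrt_lt_1_alt. unfold eta. nra. }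
  assert (0 <= transl_diff alpha t / sqrt (Rabs t)).
  { apply Rdiv_le_0_compat; [unfold transl_diff; apply sqrt_pos | apply sqrt_lt_R0; lra]. }
  rewrite Rminus_0_r, Rabs_pos_eq; lra.
Qed.

(** * A dyadic Hardy inequality *)

Lemma cauchy_schwarz_sum_n_m (v : nat -> R) p L :
  sum_n_m v p (p + L) ^ 2 <= INR (S L) * sum_n_m (fun j => v j ^ 2) p (p + L).
Proof.
  induction L as [|L IH].
  - rewrite Nat.add_0_r, !sum_n_n. simpl. lra.
  - rewrite Nat.add_succ_r, !sum_n_Sm by lia. change plus with Rplus.
    set (X := sum_n_m v p (p + L)) in *. set (Q := sum_n_m (fun j => v j ^ 2) p (p + L)) in *.
    set (y := v (S (p + L))). rewrite !S_INR in *. pose proof (pos_INR L).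
    pose proof (pow2_ge_0 (X - (INR L + 1) * y)).
    assert (Hcross : (INR L + 1) * (2 * X * y) <= (INR L + 1) * (Q + (INR L + 1) * y ^ 2)) by nra.
    apply Rmult_le_reg_l in Hcross; [| lra]. nra.
Qed.

Lemma dblock_sq_le (v : nat -> R) m : dblock v m ^ 2 <= 2 ^ m * dblock (fun j => v j ^ 2) m.
Proof.
  pose proof (pow2_ge_1 m). unfold dblock.
  replace (2 ^ S m - 1)%nat with (2 ^ m + (2 ^ m - 1))%nat by (simpl; lia).
  pose proof (cauchy_schwarz_sum_n_m v (2 ^ m) (2 ^ m - 1)) as Hcs.
  now replace (INR (S (2 ^ m - 1))) with (2 ^ m) in Hcs by (rewrite <- INR_pow2; f_equal; lia).
Qed.

Lemma sum_n_le_of_contraction (x P : nat -> R) M :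
  (forall m, 0 <= x m) -> x 0%nat <= P 0%nat ->
  (forall m, x (S m) <= 2 / 3 * x m + (P (S m) - P m)) -> sum_n x M <= 3 * P M.
Proof.
  intros Hx Hx0 HS.
  assert (Hstrong : forall K, sum_n x K + 2 * x K <= 3 * P K).
  { intros K. induction K as [|K IH].
    - rewrite sum_O. lra.
    - rewrite sum_n_Sn_R. specialize (HS K). lra. }
  specialize (Hstrong M). specialize (Hx M). lra.
Qed.

(* With [x m = dprefix v m ^ 2 / 2 ^ (m + 2)],
   [(U + W)^2 <= 4/3 U^2 + 4 W^2] and Cauchy-Schwarz on the block [W = dblock v (S m)] give
   [x (S m) <= 2/3 x m + dblock (v^2) (S m)], and such a recursion sums to [3 * dprefix (v^2)]. *)
Lemma sum_n_dprefix_sq_le (v : nat -> R) M :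
  (forall j, 0 <= v j) ->
  sum_n (fun m => dprefix v m ^ 2 / 2 ^ S (S m)) M <= 3 * dprefix (fun j => v j ^ 2) M.
Proof.
  intros Hv. apply sum_n_le_of_contraction.
  - intros m. apply Rdiv_le_0_compat; [apply pow2_ge_0 | apply pow2_pos].
  - unfold dprefix. simpl. rewrite !sum_Sn, !sum_O. change plus with Rplus.
    pose proof (pow2_ge_0 (v 0%nat - v 1%nat)). simpl. replace (2 * (2 * 1)) with 4 by ring. nra.
  - intros m. rewrite !dprefix_S.
    pose proof (dblock_sq_le v (S m)). pose proof (pow2_pos m).
    pose proof (pow2_ge_0 (dprefix v m - 3 * dblock v (S m))).
    set (U := dprefix v m) in *. set (W := dblock v (S m)) in *.
    set (Q := dblock (fun j => v j ^ 2) (S m)) in *.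
    replace (dprefix (fun j => v j ^ 2) m + Q - dprefix (fun j => v j ^ 2) m) with Q by ring.
    simpl in *. apply (Rmult_le_reg_r (2 * (2 * (2 * 2 ^ m)))); [lra |].
    field_simplify; [nra | lra | lra].
Qed.

Lemma dblock_weighted_le (a v : nat -> R) m :
  (forall k, 0 <= a k) -> (forall j, 0 <= v j) ->
  dblock (fun k => a k * sum_n v k ^ 2) m <= dblock a m * dprefix v m ^ 2.
Proof.
  intros Ha Hv. unfold dblock. rewrite <- (sum_n_m_mult_r (K := R_Ring)).
  apply sum_n_m_le_loc. intros k Hk. apply Rmult_le_compat_l; [apply Ha |].
  apply pow_incr. split; [now apply sum_n_nonneg |].
  apply sum_n_m_subrange_le; [exact Hv | lia | lia].
Qed.

Lemma dyadic_hardy (a v : nat -> R) (eta V : R) (N M : nat) :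
  (forall k, 0 <= a k) -> (forall j, 0 <= v j) ->
  (forall m, (N <= m)%nat -> 2 ^ m * dblock a m <= eta) ->
  (forall K, sum_n (fun j => v j ^ 2) K <= V) ->
  sum_n_m (fun k => a k * sum_n v k ^ 2) (2 ^ N) (2 ^ S M - 1) <= 12 * eta * V.
Proof.
  intros Ha Hv Heta HV.
  assert (Heta0 : 0 <= eta).
  { eapply Rle_trans; [| apply (Heta N (le_n N))].
    apply Rmult_le_pos; [apply Rlt_le, pow2_pos | now apply sum_n_m_nonneg]. }
  set (x m := dprefix v m ^ 2 / 2 ^ S (S m)).
  assert (Hx : forall m, 0 <= x m) by (intros m; apply Rdiv_le_0_compat; [apply pow2_ge_0 | apply pow2_pos]).
  rewrite sum_n_m_dblock.
  apply Rle_trans with (sum_n_m (fun m => 4 * eta * x m) N M).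
  - apply sum_n_m_le_loc. intros m Hm.
    eapply Rle_trans; [now apply dblock_weighted_le |].
    specialize (Heta m ltac:(lia)). pose proof (pow2_pos m).
    apply Rle_trans with (eta / 2 ^ m * dprefix v m ^ 2).
    + apply Rmult_le_compat_r; [apply pow2_ge_0 |].
      apply (Rmult_le_reg_l (2 ^ m)); [lra |]. field_simplify; lra.
    + unfold x. right. simpl. field. lra.
  - rewrite (sum_n_m_mult_l (K := R_Ring)). change mult with Rmult.
    apply Rle_trans with (4 * eta * (3 * V)); [| lra].
    apply Rmult_le_compat_l; [lra |].
    eapply Rle_trans; [apply (sum_n_m_subrange_le x 0 M N M Hx); lia |].
    eapply Rle_trans; [apply (sum_n_dprefix_sq_le v M Hv) |].
    apply Rmult_le_compat_l; [lra | apply HV].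
Qed.

(** * The dyadic condition implies compactness of the Rhaly operator *)

Lemma Cmod_rhaly_sq_le (alpha f : nat -> C) k :
  Cmod (rhaly alpha f k) ^ 2 <= sqmod alpha k * sum_n (fun j => Cmod (f j)) k ^ 2.
Proof.
  unfold rhaly, sqmod. rewrite Cmod_mult, Rpow_mult_distr.
  apply Rmult_le_compat_l; [apply pow2_ge_0 |].
  apply pow_incr. split; [apply Cmod_ge_0 | apply Cmod_sum_n_le].
Qed.

Lemma rhaly_tail_le (alpha f : nat -> C) (eta V : R) (N M : nat) :
  (forall m, (N <= m)%nat -> dyadic_block alpha m <= eta) ->
  (forall K, sum_n (fun j => Cmod (f j) ^ 2) K <= V) ->
  sum_n_m (fun k => Cmod (rhaly alpha f k) ^ 2) (2 ^ N) (2 ^ S M - 1) <= 12 * eta * V.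
Proof.
  intros Heta HV. eapply Rle_trans; [apply sum_n_m_le; intros k; apply Cmod_rhaly_sq_le |].
  apply dyadic_hardy; [apply sqmod_nonneg | intros; apply Cmod_ge_0 | exact Heta | exact HV].
Qed.

Lemma rhaly_partial_le_head (alpha f : nat -> C) (eta V : R) (N M : nat) :
  (forall m, (N <= m)%nat -> dyadic_block alpha m <= eta) ->
  (forall K, sum_n (fun j => Cmod (f j) ^ 2) K <= V) ->
  sum_n (fun k => Cmod (rhaly alpha f k) ^ 2) M
  <= sum_n (fun k => Cmod (rhaly alpha f k) ^ 2) (2 ^ N - 1) + 12 * eta * V.
Proof.
  intros Heta HV. pose proof (Nat.pow_gt_lin_r 2 (S (M + N)) ltac:(lia)).
  pose proof (Nat.pow_le_mono_r 2 N (S (M + N)) ltac:(lia) ltac:(lia)). pose proof (pow2_ge_1 N).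
  apply Rle_trans with (sum_n (fun k => Cmod (rhaly alpha f k) ^ 2) (2 ^ S (M + N) - 1)).
  { unfold sum_n. apply sum_n_m_subrange_le; [intros; apply pow2_ge_0 | lia | lia]. }
  rewrite (sum_n_split _ (2 ^ N - 1)) by lia. replace (S (2 ^ N - 1)) with (2 ^ N)%nat by lia.
  apply Rplus_le_compat_l. now apply rhaly_tail_le.
Qed.

Lemma rhaly_partial_le (alpha f : nat -> C) (E V : R) M :
  (forall m, dyadic_block alpha m <= E) ->
  (forall K, sum_n (fun j => Cmod (f j) ^ 2) K <= V) ->
  sum_n (fun k => Cmod (rhaly alpha f k) ^ 2) M <= (sqmod alpha 0 + 12 * E) * V.
Proof.
  intros HE HV. eapply Rle_trans; [apply (rhaly_partial_le_head alpha f E V 0); auto |].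
  change (2 ^ 0 - 1)%nat with 0%nat. rewrite sum_O.
  assert (Cmod (rhaly alpha f 0) ^ 2 <= sqmod alpha 0 * V).
  { eapply Rle_trans; [apply Cmod_rhaly_sq_le |]. apply Rmult_le_compat_l; [apply sqmod_nonneg |].
    specialize (HV 0%nat). rewrite sum_O in HV |- *. exact HV. }
  lra.
Qed.

Lemma rhaly_in_l2 (alpha : nat -> C) : is_lim_seq (dyadic_block alpha) 0 ->
  forall f, in_l2 f -> in_l2 (rhaly alpha f).
Proof.
  intros HD f Hf. destruct (is_lim_seq_bounded_above _ HD) as [E HE].
  apply (l2norm_le_of_partial _ ((sqmod alpha 0 + 12 * E) * l2norm f ^ 2)).
  intros M. apply rhaly_partial_le; [exact HE |]. intros K. now apply sum_n_sq_le_l2norm_sq.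
Qed.

Lemma rhaly_coord_null (alpha : nat -> C) (w : nat -> nat -> C) k :
  (forall j, is_lim_seq (fun m => Cmod (w m j)) 0) ->
  is_lim_seq (fun m => Cmod (rhaly alpha (w m) k) ^ 2) 0.
Proof.
  intros Hw.
  apply is_lim_seq_le_le with (fun _ => 0) (fun m => sqmod alpha k * sum_n (fun j => Cmod (w m j)) k ^ 2).
  - intros m. split; [apply pow2_ge_0 | apply Cmod_rhaly_sq_le].
  - apply is_lim_seq_const.
  - replace (Finite 0) with (Rbar_mult (sqmod alpha k) 0) by (simpl; f_equal; ring).
    apply is_lim_seq_scal_l, is_lim_seq_sq_0. rewrite <- (sum_n_zero_R k).
    apply is_lim_seq_sum_n. intros j _. apply Hw.
Qed.

(* The first [2 ^ N] coordinates converge, and the rest is uniformly small by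
   [rhaly_partial_le_head] once the dyadic blocks of [alpha] are small past [N]. *)
Lemma rhaly_norm_null (alpha : nat -> C) (w : nat -> nat -> C) (V : R) :
  is_lim_seq (dyadic_block alpha) 0 ->
  (forall m K, sum_n (fun j => Cmod (w m j) ^ 2) K <= V) ->
  (forall j, is_lim_seq (fun m => Cmod (w m j)) 0) ->
  is_lim_seq (fun m => l2norm (rhaly alpha (w m))) 0.
Proof.
  intros HD HV Hw.
  assert (HV0 : 0 <= V).
  { eapply Rle_trans; [| apply (HV 0%nat 0%nat)]. apply sum_n_nonneg. intros; apply pow2_ge_0. }
  apply is_lim_seq_spec. intros eps. pose proof (cond_pos eps) as Heps.
  set (eta := eps ^ 2 / (24 * (V + 1))).
  assert (Heta : 0 < eta) by (unfold eta; apply Rdiv_lt_0_compat; nra).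
  assert (Htail : 12 * eta * V < eps ^ 2 / 2).
  { unfold eta. apply (Rmult_lt_reg_r (2 * (V + 1))); [lra |]. field_simplify; nra. }
  apply is_lim_seq_spec in HD. destruct (HD (mkposreal _ Heta)) as [N HN]. simpl in HN.
  set (head m := sum_n (fun k => Cmod (rhaly alpha (w m) k) ^ 2) (2 ^ N - 1)).
  assert (Hhead : is_lim_seq head 0).
  { unfold head. rewrite <- (sum_n_zero_R (2 ^ N - 1)).
    apply is_lim_seq_sum_n. intros k _. now apply rhaly_coord_null. }
  apply is_lim_seq_spec in Hhead. destruct (Hhead (mkposreal (eps ^ 2 / 2) ltac:(nra))) as [m0 Hm0].
  exists m0. intros m Hm. specialize (Hm0 m Hm). simpl in Hm0.
  assert (Hhead_nonneg : 0 <= head m) by (apply sum_n_nonneg; intros; apply pow2_ge_0).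
  rewrite Rminus_0_r, Rabs_pos_eq in Hm0 by exact Hhead_nonneg.
  destruct (l2norm_le_of_partial (rhaly alpha (w m)) (head m + 12 * eta * V)) as [_ Hnorm].
  { intros M. apply rhaly_partial_le_head; [| apply HV].
    intros n Hn. specialize (HN n Hn). pose proof (Rle_abs (dyadic_block alpha n - 0)). lra. }
  assert (Hlt : sqrt (head m + 12 * eta * V) < eps).
  { rewrite <- (sqrt_pow2 eps) by lra. apply sqrt_lt_1_alt. split; [nra | lra]. }
  rewrite Rminus_0_r, Rabs_pos_eq by apply sqrt_pos. lra.
Qed.

Definition strictly_increasing (phi : nat -> nat) : Prop := forall m, (phi m < phi (S m))%nat.

Lemma strictly_increasing_lt phi : strictly_increasing phi -> forall a b, (a < b)%nat -> (phi a < phi b)%nat.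
Proof. intros Hphi a b Hab. induction Hab; [apply Hphi | specialize (Hphi m); lia]. Qed.

Lemma strictly_increasing_le phi : strictly_increasing phi -> forall a b, (a <= b)%nat -> (phi a <= phi b)%nat.
Proof.
  intros Hphi a b Hab. destruct (Nat.eq_dec a b) as [-> | Hne]; [lia |].
  pose proof (strictly_increasing_lt phi Hphi a b ltac:(lia)). lia.
Qed.

Lemma strictly_increasing_ge_id phi : strictly_increasing phi -> forall a, (a <= phi a)%nat.
Proof. intros Hphi a. induction a as [|a IH]; [lia | specialize (Hphi a); lia]. Qed.

Lemma bounded_seq_convergent_subseq (s : nat -> R) (B : R) : (forall m, Rabs (s m) <= B) ->
  exists tau, strictly_increasing tau /\ ex_finite_lim_seq (fun m => s (tau m)).
Proof.
  intros HB.
  destruct (Bolzano_Weierstrass s (fun c => - B <= c <= B) (compact_P3 (- B) B)) as [l Hl].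
  { intros n. specialize (HB n). apply Rabs_le_between in HB. exact HB. }
  assert (Hclose : forall kN : nat * nat, exists p, (snd kN <= p)%nat /\ Rabs (s p - l) < / (INR (fst kN) + 1)).
  { intros [k N]. simpl. pose proof (pos_INR k).
    destruct (Hl (fun y => Rabs (y - l) < / (INR k + 1)) N) as [p Hp]; [| now exists p].
    exists (mkposreal _ (Rinv_0_lt_compat (INR k + 1) ltac:(lra))). now intros y Hy. }
  destruct (choice _ Hclose) as [f Hf].
  set (tau := fix tau k := match k with 0%nat => f (0%nat, 0%nat) | S k' => f (S k', S (tau k')) end).
  assert (Htau : forall k, Rabs (s (tau k) - l) < / (INR k + 1)).
  { intros [|k]; [apply (Hf (0%nat, 0%nat)) | apply (Hf (S k, S (tau k)))]. }
  exists tau. split.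
  - intros m. simpl. destruct (Hf (S m, S (tau m))) as [Hge _]. simpl in Hge. lia.
  - exists l. apply is_lim_seq_spec. intros eps.
    destruct (archimed_cor1 eps (cond_pos eps)) as [N [HN HN0]].
    exists N. intros n Hn. eapply Rlt_trans; [apply Htau |].
    apply Rle_lt_trans with (/ INR N); [| exact HN].
    apply Rinv_le_contravar; [now apply lt_0_INR | apply le_INR in Hn; lra].
Qed.

(* Cantor's diagonal argument: [Psi (S j)] is a subsequence of [Psi j] along which column
   [S j] converges, and the diagonal [m |-> Psi m m] is eventually a subsequence of each [Psi j]. *)
Lemma diagonal_extraction (x : nat -> nat -> R) (B : R) : (forall m j, Rabs (x m j) <= B) ->
  exists phi, strictly_increasing phi /\ forall j, ex_finite_lim_seq (fun m => x (phi m) j).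
Proof.
  intros HB.
  assert (Hstep : forall sj : (nat -> nat) * nat, exists tau,
             strictly_increasing tau /\ ex_finite_lim_seq (fun m => x (fst sj (tau m)) (snd sj))).
  { intros [sigma j]. simpl. apply (bounded_seq_convergent_subseq (fun m => x (sigma m) j) B).
    intros; apply HB. }
  destruct (choice _ Hstep) as [T HT].
  set (Psi := fix Psi j := match j with
              | 0%nat => T (fun m => m, 0%nat)
              | S j' => fun m => Psi j' (T (Psi j', S j') m) end).
  assert (Hincr : forall j, strictly_increasing (Psi j)).
  { induction j as [|j IH]; [apply (HT (fun m => m, 0%nat)) |].
    intros m. simpl. apply strictly_increasing_lt; [exact IH | apply (HT (Psi j, S j))]. }
  assert (Hconv : forall j, ex_finite_lim_seq (fun m => x (Psi j m) j)).
  { intros [|j]; [apply (HT (fun m => m, 0%nat)) | apply (HT (Psi j, S j))]. }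
  assert (Hsub : forall j k z, exists s, Psi (j + k)%nat z = Psi j s).
  { intros j k. induction k as [|k IH]; intros z.
    - exists z. now rewrite Nat.add_0_r.
    - rewrite Nat.add_succ_r. apply IH. }
  exists (fun m => Psi m m). split.
  - intros m. simpl.
    pose proof (strictly_increasing_ge_id _ (proj1 (HT (Psi m, S m))) (S m)) as Hge.
    pose proof (strictly_increasing_le _ (Hincr m) _ _ Hge). pose proof (Hincr m m). simpl in *. lia.
  - intros j. destruct (Hconv j) as [l Hl]. exists l.
    apply is_lim_seq_spec in Hl. apply is_lim_seq_spec. intros eps. destruct (Hl eps) as [K HK].
    exists (j + S (Psi j K))%nat. intros m Hm.
    destruct (Hsub j (m - j)%nat m) as [s Hs]. replace (j + (m - j))%nat with m in Hs by lia.
    rewrite Hs. apply HK. destruct (le_lt_dec K s) as [| Hlt]; [assumption | exfalso].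
    pose proof (strictly_increasing_lt _ (Hincr j) s K Hlt).
    pose proof (strictly_increasing_ge_id _ (Hincr m) m). lia.
Qed.

Lemma complex_diagonal_extraction (u : nat -> nat -> C) (B : R) : (forall m j, Cmod (u m j) <= B) ->
  exists phi L, strictly_increasing phi /\ forall j, is_lim_seq (fun m => Cmod (u (phi m) j - L j)) 0.
Proof.
  intros HB.
  assert (Hparts : forall m j, Rabs (fst (u m j)) <= B /\ Rabs (snd (u m j)) <= B).
  { intros m j. pose proof (Rmax_Cmod (u m j)). pose proof (HB m j).
    pose proof (Rmax_l (Rabs (fst (u m j))) (Rabs (snd (u m j)))).
    pose proof (Rmax_r (Rabs (fst (u m j))) (Rabs (snd (u m j)))). lra. }
  destruct (diagonal_extraction (fun m j => fst (u m j)) B (fun m j => proj1 (Hparts m j)))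
    as [phi1 [Hphi1 Hfst]].
  destruct (diagonal_extraction (fun m j => snd (u (phi1 m) j)) B (fun m j => proj2 (Hparts (phi1 m) j)))
    as [phi2 [Hphi2 Hsnd]].
  assert (Hlim : forall j, exists Lj : C,
             is_lim_seq (fun m => fst (u (phi1 (phi2 m)) j)) (fst Lj)
             /\ is_lim_seq (fun m => snd (u (phi1 (phi2 m)) j)) (snd Lj)).
  { intros j. destruct (Hfst j) as [a Ha], (Hsnd j) as [b Hb]. exists (a, b). split; [| exact Hb].
    apply (is_lim_seq_subseq (fun m => fst (u (phi1 m) j))); [apply eventually_subseq, Hphi2 | exact Ha]. }
  destruct (choice _ Hlim) as [L HL].
  exists (fun m => phi1 (phi2 m)), L. split.
  - intros m. apply strictly_increasing_lt; [exact Hphi1 | apply Hphi2].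
  - intros j. destruct (HL j) as [Ha Hb].
    apply is_lim_seq_le_le with (fun _ => 0)
      (fun m => Rabs (fst (u (phi1 (phi2 m)) j) - fst (L j)) + Rabs (snd (u (phi1 (phi2 m)) j) - snd (L j))).
    + intros m. split; [apply Cmod_ge_0 | apply Cmod_le_Rabs_fst_snd].
    + apply is_lim_seq_const.
    + replace (Finite 0) with (Finite (0 + 0)) by (f_equal; ring).
      apply is_lim_seq_plus'; now apply is_lim_seq_dist_0.
Qed.

Lemma rhaly_compact (alpha : nat -> C) : is_lim_seq (dyadic_block alpha) 0 -> compact_on_l2 (rhaly alpha).
Proof.
  intros HD. split; [exact (rhaly_in_l2 alpha HD) |]. intros u Hu.
  assert (Hpart : forall m K, sum_n (fun j => Cmod (u m j) ^ 2) K <= 1).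
  { intros m K. destruct (Hu m) as [Hl2 Hnorm].
    eapply Rle_trans; [now apply sum_n_sq_le_l2norm_sq |].
    pose proof (sqrt_pos (Series (fun n => Cmod (u m n) ^ 2))). unfold l2norm in *. nra. }
  assert (Hbound : forall m j, Cmod (u m j) <= 1).
  { intros m j. destruct (Hu m) as [Hl2 Hnorm]. eapply Rle_trans; [now apply Cmod_le_l2norm | exact Hnorm]. }
  destruct (complex_diagonal_extraction u 1 Hbound) as [phi [L [Hphi HL]]].
  assert (HLpart : forall K, sum_n (fun j => Cmod (L j) ^ 2) K <= 1).
  { intros K. change (Rbar_le (sum_n (fun j => Cmod (L j) ^ 2) K) 1).
    apply (is_lim_seq_le (fun m => sum_n (fun j => Cmod (u (phi m) j) ^ 2) K) (fun _ => 1));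
      [intros; apply Hpart | | apply is_lim_seq_const].
    apply is_lim_seq_sum_n. intros j _. now apply is_lim_seq_sq, is_lim_seq_Cmod_of_dist. }
  destruct (l2norm_le_of_partial L 1 HLpart) as [HL2 _].
  exists phi. split; [exact Hphi |]. exists (rhaly alpha L). split; [exact (rhaly_in_l2 alpha HD L HL2) |].
  apply (is_lim_seq_ext (fun m => l2norm (rhaly alpha (fun j => u (phi m) j - L j)%C))).
  { intros m. unfold l2norm, rhaly. f_equal. apply Series_ext. intros k.
    rewrite sum_n_Cminus. do 2 f_equal. ring. }
  apply (rhaly_norm_null alpha _ 4 HD); [| exact HL].
  intros m K. eapply Rle_trans; [apply sum_n_m_le; intros j; apply Cmod_sub_sq_le |].
  rewrite (sum_n_m_plus (G := R_AbelianMonoid)), !(sum_n_m_mult_l (K := R_Ring)).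
  change plus with Rplus. change mult with Rmult.
  apply Rle_trans with (2 * 1 + 2 * 1); [| lra].
  apply Rplus_le_compat; apply Rmult_le_compat_l; [lra | exact (Hpart (phi m) K) | lra | exact (HLpart K)].
Qed.

(** * Compactness of the Rhaly operator implies the dyadic condition *)

Lemma is_lim_seq_of_subseqs (u : nat -> R) (l : R) :
  (forall psi, strictly_increasing psi ->
     exists phi, strictly_increasing phi /\ is_lim_seq (fun m => u (psi (phi m))) l) ->
  is_lim_seq u l.
Proof.
  intros Hsub. apply NNPP. intros Hnot.
  assert (Hfar : exists eps : posreal, forall N, exists n, (N <= n)%nat /\ eps <= Rabs (u n - l)).
  { apply NNPP. intros Hno. apply Hnot, is_lim_seq_spec. intros eps.
    apply NNPP. intros Hev. apply Hno. exists eps. intros N.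
    apply NNPP. intros HN. apply Hev. exists N. intros n Hn.
    apply Rnot_le_lt. intros Hle. apply HN. now exists n. }
  destruct Hfar as [eps Hfar]. destruct (choice _ Hfar) as [f Hf].
  set (psi := fix psi k := match k with 0%nat => f 0%nat | S k' => f (S (psi k')) end).
  assert (Hpsi : strictly_increasing psi) by (intros k; simpl; pose proof (proj1 (Hf (S (psi k)))); lia).
  destruct (Hsub psi Hpsi) as [phi [_ Hlim]].
  apply is_lim_seq_spec in Hlim. destruct (Hlim eps) as [N HN].
  specialize (HN N (le_n N)). destruct (phi N) as [|k]; simpl in HN.
  - pose proof (proj2 (Hf 0%nat)). lra.
  - pose proof (proj2 (Hf (S (psi k)))). lra.
Qed.

(* Every subsequence has a further subsequence converging in norm, and its limit can only be [0]. *)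
Lemma compact_on_l2_coordinatewise_null (T : (nat -> C) -> nat -> C) (u : nat -> nat -> C) :
  compact_on_l2 T -> (forall m, in_l2 (u m) /\ l2norm (u m) <= 1) ->
  (forall k, is_lim_seq (fun m => Cmod (T (u m) k)) 0) ->
  is_lim_seq (fun m => l2norm (T (u m))) 0.
Proof.
  intros [HT Hcomp] Hu Hk. apply is_lim_seq_of_subseqs. intros psi Hpsi.
  destruct (Hcomp (fun m => u (psi m)) (fun m => Hu (psi m))) as [phi [Hphi [g [Hg Hlim]]]].
  exists phi. split; [exact Hphi |].
  assert (Hsubseq : filterlim (fun m => psi (phi m)) eventually eventually).
  { apply eventually_subseq. intros m. apply strictly_increasing_lt; [exact Hpsi | apply Hphi]. }
  assert (Hg0 : forall k, g k = 0%C).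
  { intros k. apply Cmod_eq_0, Rle_antisym; [| apply Cmod_ge_0].
    cut (Rbar_le (Cmod (g k)) (0 + 0)); [simpl; lra |].
    apply (is_lim_seq_le (fun _ => Cmod (g k))
             (fun m => Cmod (T (u (psi (phi m))) k) + l2norm (fun k => T (u (psi (phi m))) k - g k)%C)).
    - intros m. eapply Rle_trans; [| apply Rplus_le_compat_l, Cmod_le_l2norm, in_l2_minus;
                               [apply HT, Hu | exact Hg]].
      pose proof (Cmod_triangle (T (u (psi (phi m))) k) (- (T (u (psi (phi m))) k - g k))) as Htri.
      rewrite Cmod_opp in Htri.
      replace (T (u (psi (phi m))) k + - (T (u (psi (phi m))) k - g k))%C with (g k) in Htri by ring.
      exact Htri.
    - apply is_lim_seq_const.
    - apply is_lim_seq_plus'; [apply (is_lim_seq_subseq _ _ _ Hsubseq (Hk k)) | exact Hlim]. }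
  refine (is_lim_seq_ext _ _ _ _ Hlim). intros m. unfold l2norm. f_equal.
  apply Series_ext. intros k. rewrite Hg0. do 2 f_equal. ring.
Qed.

(* The normalized indicator of [[0, 2 ^ n)]: it tends to [0] coordinatewise, while
   [rhaly alpha (dyadic_unit n)] carries the whole [n]-th dyadic block of [alpha]. *)
Definition dyadic_unit (n j : nat) : C := RtoC (if (j <? 2 ^ n)%nat then / sqrt (2 ^ n) else 0).

Lemma inv_sqrt_pow2_sq n : (/ sqrt (2 ^ n)) ^ 2 = / 2 ^ n.
Proof. rewrite pow_inv, pow2_sqrt by apply Rlt_le, pow2_pos. reflexivity. Qed.

Lemma sum_n_indicator (P : nat) (c : R) k :
  sum_n (fun j => if (j <? P)%nat then c else 0) k = INR (Nat.min (S k) P) * c :> R.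
Proof.
  induction k as [|k IH].
  - rewrite sum_O. destruct P; simpl; ring.
  - rewrite sum_n_Sn_R, IH. destruct (Nat.ltb_spec (S k) P).
    + rewrite !Nat.min_l by lia. rewrite (S_INR (S k)). ring.
    + rewrite !Nat.min_r by lia. ring.
Qed.

Lemma dyadic_unit_ball n : in_l2 (dyadic_unit n) /\ l2norm (dyadic_unit n) <= 1.
Proof.
  rewrite <- sqrt_1. apply l2norm_le_of_partial. intros N.
  rewrite (sum_n_ext _ (fun j => if (j <? 2 ^ n)%nat then / 2 ^ n else 0)).
  - rewrite sum_n_indicator. pose proof (pow2_pos n).
    assert (INR (Nat.min (S N) (2 ^ n)) <= 2 ^ n) by (rewrite <- INR_pow2; apply le_INR; lia).
    apply (Rmult_le_reg_r (2 ^ n)); [lra |]. field_simplify; lra.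
  - intros j. unfold dyadic_unit. rewrite Cmod_R, pow2_abs.
    destruct (j <? 2 ^ n)%nat; [apply inv_sqrt_pow2_sq | simpl; ring].
Qed.

Lemma Cmod_rhaly_dyadic_unit_sq (alpha : nat -> C) n k :
  Cmod (rhaly alpha (dyadic_unit n) k) ^ 2 = sqmod alpha k * (INR (Nat.min (S k) (2 ^ n)) ^ 2 / 2 ^ n).
Proof.
  unfold rhaly, dyadic_unit, sqmod.
  rewrite sum_n_RtoC, sum_n_indicator, Cmod_mult, Rpow_mult_distr, Cmod_R, pow2_abs.
  rewrite Rpow_mult_distr, inv_sqrt_pow2_sq. reflexivity.
Qed.

Lemma dyadic_block_le_rhaly_dyadic_unit (alpha : nat -> C) n : in_l2 (rhaly alpha (dyadic_unit n)) ->
  dyadic_block alpha n <= l2norm (rhaly alpha (dyadic_unit n)) ^ 2.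
Proof.
  intros Hl2. eapply Rle_trans; [| apply (sum_n_sq_le_l2norm_sq _ (2 ^ S n - 1) Hl2)].
  eapply Rle_trans; [| apply sum_n_m_subrange_le with (n' := (2 ^ n)%nat) (m' := (2 ^ S n - 1)%nat); [intros; apply pow2_ge_0 | lia | lia]].
  unfold dyadic_block. rewrite Rmult_comm. fold (sqmod alpha).
  rewrite <- (sum_n_m_mult_r (K := R_Ring)). apply sum_n_m_le_loc. intros k Hk.
  rewrite Cmod_rhaly_dyadic_unit_sq, Nat.min_r, INR_pow2 by lia.
  pose proof (pow2_pos n). right. change mult with Rmult. field. lra.
Qed.

Lemma rhaly_dyadic_unit_coord_null (alpha : nat -> C) k :
  is_lim_seq (fun n => Cmod (rhaly alpha (dyadic_unit n) k)) 0.
Proof.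
  assert (Hsq : is_lim_seq (fun n => Cmod (rhaly alpha (dyadic_unit n) k) ^ 2) 0).
  { apply is_lim_seq_le_le with (fun _ => 0) (fun n => sqmod alpha k * INR (S k) ^ 2 * (/ 2) ^ n).
    - intros n. split; [apply pow2_ge_0 |]. rewrite Cmod_rhaly_dyadic_unit_sq, pow_inv.
      pose proof (pow2_pos n). pose proof (sqmod_nonneg alpha k).
      assert (INR (Nat.min (S k) (2 ^ n)) ^ 2 <= INR (S k) ^ 2)
        by (apply pow_incr; split; [apply pos_INR | apply le_INR; lia]).
      unfold Rdiv. rewrite Rmult_assoc. apply Rmult_le_compat_l; [lra |].
      apply Rmult_le_compat_r; [apply Rlt_le, Rinv_0_lt_compat |]; lra.
    - apply is_lim_seq_const.
    - replace (Finite 0) with (Rbar_mult (sqmod alpha k * INR (S k) ^ 2) 0) by (simpl; f_equal; ring).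
      apply is_lim_seq_scal_l, is_lim_seq_geom. rewrite Rabs_pos_eq; lra. }
  apply (is_lim_seq_continuous sqrt _ 0) in Hsq; [| apply continuity_pt_sqrt; lra].
  rewrite sqrt_0 in Hsq. refine (is_lim_seq_ext _ _ _ _ Hsq).
  intros n. apply sqrt_pow2, Cmod_ge_0.
Qed.

Lemma dyadic_block_lim_of_compact (alpha : nat -> C) :
  compact_on_l2 (rhaly alpha) -> is_lim_seq (dyadic_block alpha) 0.
Proof.
  intros Hc.
  pose proof (compact_on_l2_coordinatewise_null _ dyadic_unit Hc dyadic_unit_ball
                (rhaly_dyadic_unit_coord_null alpha)) as Hnull.
  apply is_lim_seq_le_le with (fun _ => 0) (fun n => l2norm (rhaly alpha (dyadic_unit n)) ^ 2).
  - intros n. split; [apply dyadic_block_nonneg |].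
    apply dyadic_block_le_rhaly_dyadic_unit, (proj1 Hc), dyadic_unit_ball.
  - apply is_lim_seq_const.
  - now apply is_lim_seq_sq_0.
Qed.

Theorem theorem1p2 (alpha : nat -> C) (halpha : in_l2 alpha) :
  (compact_on_l2 (rhaly alpha) <-> in_small_mean_lip alpha) /\
  (in_small_mean_lip alpha <-> is_lim_seq (dyadic_block alpha) 0).
Proof.
  assert (Hlip : in_small_mean_lip alpha <-> is_lim_seq (dyadic_block alpha) 0).
  { split.
    - intros [_ Hlim]. now apply dyadic_block_lim_of_transl_ratio.
    - intros HD. split; [now apply transl_ratio_bounded | now apply transl_ratio_lim]. }
  split; [| exact Hlip]. rewrite Hlip. split.
  - apply dyadic_block_lim_of_compact.
  - apply rhaly_compact.
Qed.
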